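(* Let $G$ be a finite group, $k$ a field of characteristic $p$, and $M$ an indecomposable $kG$-module. If $M\otimes M\cong M\oplus X$ for some algebraic $kG$-module $X$, then $M$ is algebraic.
   Context: A $kG$-module $M$ is algebraic if only finitely many isomorphism classes of indecomposable modules occur as direct summands of the tensor powers $M^{\otimes n}$, $n\geq 1$. *)

From HB Require Import structures.
From mathcomp Require Import all_boot all_order all_algebra all_fingroup.
From mathcomp Require Import mxrepresentation.
From Stdlib Require List.
Set Implicit Arguments. Unset Strict Implicit. Unset Printing Implicit Defensive.
Import GRing.Theory.
Local Open Scope ring_scope.

Section TensorSum.
Variables (F : fieldType) (gT : finGroupType) (G : {group gT}).

(* The map X |-> A^T X B on d1 x d2 matrices: under the identification
   k^d1 (x) k^d2 = 'M_(d1,d2), v (x) w |-> v^T w, this is (v (x) w) |-> vA (x) wB. *)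
Definition tens_map m1 n1 m2 n2 (A : 'M[F]_(m1, n1)) (B : 'M[F]_(m2, n2))
  (X : 'M[F]_(m1, m2)) : 'M[F]_(n1, n2) := A^T *m X *m B.

Lemma tens_map_is_linear m1 n1 m2 n2 (A : 'M[F]_(m1, n1)) (B : 'M[F]_(m2, n2)) :
  linear (tens_map A B).
Proof.
by move=> a X Y; rewrite /tens_map mulmxDr mulmxDl -scalemxAr -scalemxAl.
Qed.

Lemma tens_mapE m1 n1 m2 n2 (A : 'M[F]_(m1, n1)) (B : 'M[F]_(m2, n2)) X :
  tens_map A B X = A^T *m X *m B.
Proof. by []. Qed.

HB.instance Definition _ m1 n1 m2 n2 (A : 'M[F]_(m1, n1)) (B : 'M[F]_(m2, n2)) :=
  GRing.isLinear.Build F _ _ _ (tens_map A B) (tens_map_is_linear A B).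

(* Kronecker (tensor) product of matrices, acting on row vectors of
   length m1 * m2 (= mxvec of m1 x m2 matrices). *)
Definition tens_mx m1 n1 m2 n2 (A : 'M[F]_(m1, n1)) (B : 'M[F]_(m2, n2)) :
  'M[F]_(m1 * m2, n1 * n2) := lin_mx (tens_map A B).

Lemma tens_mx_mul m1 n1 p1 m2 n2 p2 (A : 'M[F]_(m1, n1)) (B : 'M[F]_(m2, n2))
  (C : 'M[F]_(n1, p1)) (D : 'M[F]_(n2, p2)) :
  tens_mx (A *m C) (B *m D) = tens_mx A B *m tens_mx C D.
Proof.
apply/row_matrixP=> i; rewrite !rowE -(vec_mxK (delta_mx 0 i)) mulmxA.
rewrite /tens_mx !mul_vec_lin; congr mxvec; set X := vec_mx _.
transitivity ((A *m C)^T *m X *m (B *m D)); first by [].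
transitivity (C^T *m (A^T *m X *m B) *m D); last by [].
by rewrite trmx_mul !mulmxA.
Qed.

Lemma tens_mx1 m1 m2 : tens_mx (1%:M : 'M[F]_m1) (1%:M : 'M[F]_m2) = 1%:M.
Proof.
apply/row_matrixP=> i; rewrite !rowE -(vec_mxK (delta_mx 0 i)) /tens_mx.
rewrite mul_vec_lin mulmx1; congr mxvec; set X := vec_mx _.
transitivity ((1%:M : 'M[F]_m1)^T *m X *m 1%:M); first by [].
by rewrite trmx1 mul1mx mulmx1.
Qed.

Definition tprod_mx d1 d2 (r1 : mx_representation F G d1)
  (r2 : mx_representation F G d2) (x : gT) : 'M[F]_(d1 * d2) :=
  tens_mx (r1 x) (r2 x).

Lemma tprod_mx_repr d1 d2 (r1 : mx_representation F G d1)
  (r2 : mx_representation F G d2) : mx_repr G (tprod_mx r1 r2).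
Proof.
split; first by rewrite /tprod_mx !repr_mx1 tens_mx1.
by move=> x y Gx Gy; rewrite /tprod_mx !repr_mxM // tens_mx_mul.
Qed.

Definition tprod_repr d1 d2 (r1 : mx_representation F G d1)
  (r2 : mx_representation F G d2) : mx_representation F G (d1 * d2) :=
  MxRepresentation (tprod_mx_repr r1 r2).

Definition dsum_mx d1 d2 (r1 : mx_representation F G d1)
  (r2 : mx_representation F G d2) (x : gT) : 'M[F]_(d1 + d2) :=
  block_mx (r1 x) 0 0 (r2 x).

Lemma dsum_mx_repr d1 d2 (r1 : mx_representation F G d1)
  (r2 : mx_representation F G d2) : mx_repr G (dsum_mx r1 r2).
Proof.
split; first by rewrite /dsum_mx !repr_mx1 -scalar_mx_block.
move=> x y Gx Gy; rewrite /dsum_mx !repr_mxM // mulmx_block.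
by rewrite !mulmx0 !mul0mx !addr0 !add0r.
Qed.

Definition dsum_repr d1 d2 (r1 : mx_representation F G d1)
  (r2 : mx_representation F G d2) : mx_representation F G (d1 + d2) :=
  MxRepresentation (dsum_mx_repr r1 r2).

Fixpoint tpow_dim (d n : nat) : nat :=
  match n with 0 => d | n'.+1 => (d * tpow_dim d n')%N end.

(* tpow_repr r n is the (n+1)-st tensor power M^{(x)(n+1)}. *)
Fixpoint tpow_repr d (r : mx_representation F G d) (n : nat) :
  mx_representation F G (tpow_dim d n) :=
  match n with
  | 0 => r
  | n'.+1 => tprod_repr r (tpow_repr r n')
  end.

Definition mx_indecomposable d (r : mx_representation F G d) : Prop :=
  (0 < d)%N /\
  forall U V : 'M[F]_d, mxmodule r U -> mxmodule r V ->
    mxdirect (U + V) -> (U + V :=: 1%:M)%MS -> U = 0 \/ V = 0.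

Definition is_dsummand d (W : mx_representation F G d) e
  (N : mx_representation F G e) : Prop :=
  exists (f : nat) (Y : mx_representation F G f), mx_rsim N (dsum_repr W Y).

Definition mx_algebraic d (r : mx_representation F G d) : Prop :=
  exists S : seq {e : nat & mx_representation F G e},
    forall (n : nat) (e : nat) (W : mx_representation F G e),
      mx_indecomposable W -> is_dsummand W (tpow_repr r n) ->
      exists2 s, List.In s S & mx_rsim W (projT2 s).
End TensorSum.

From HB Require Import structures.
From mathcomp Require Import all_boot all_order all_algebra all_fingroup.
From mathcomp Require Import mxrepresentation.
From Stdlib Require Import Classical.
From Stdlib Require List.
Set Implicit Arguments. Unset Strict Implicit. Unset Printing Implicit Defensive.
Import GRing.Theory.
Local Open Scope ring_scope.

(* Call a finite list L of modules a cover of N if every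
   indecomposable direct summand of N is isomorphic to a member of L; M is
   algebraic iff one list covers all tensor powers of M.  The only structure
   theory needed is a Krull-Schmidt type exchange property, derived from
   Fitting's lemma (an endomorphism of an indecomposable module is invertible
   or nilpotent, so its endomorphism ring is local): an indecomposable
   summand of A (+) B is a summand of A or of B.  Hence covers are stable
   under direct sums, and by induction along a decomposition into
   indecomposables every module has a finite cover.
   Let L consist of M, a cover of all powers of X, and covers of s (x) M for
   the finitely many indecomposable summands s of powers of X.  From
   M^(k+2) ~ M^(k+1) (+) X (x) M^k, an induction shows that every tensor
   power of M, and every product Z (x) M^k with Z a summand of a power of X,
   is covered by L. *)

Section Intertwiners.
Variables (F : fieldType) (gT : finGroupType) (G : {group gT}).
Local Notation rep := (mx_representation F G).

Definition intertw n1 n2 (r1 : rep n1) (r2 : rep n2) (f : 'M[F]_(n1, n2)) :=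
  forall x, x \in G -> r1 x *m f = f *m r2 x.

Definition retract n1 n2 (r1 : rep n1) (r2 : rep n2) :=
  exists f g, [/\ intertw r1 r2 f, intertw r2 r1 g & f *m g = 1%:M].

(* Isomorphism given by a pair of mutually inverse homomorphisms; unlike
   mx_rsim it does not mention the equality of the dimensions. *)
Definition isomorphic n1 n2 (r1 : rep n1) (r2 : rep n2) :=
  exists f g, [/\ intertw r1 r2 f, intertw r2 r1 g, f *m g = 1%:M & g *m f = 1%:M].

Lemma intertw_mul n1 n2 n3 (r1 : rep n1) (r2 : rep n2) (r3 : rep n3) f g :
  intertw r1 r2 f -> intertw r2 r3 g -> intertw r1 r3 (f *m g).
Proof. by move=> hf hg x Gx; rewrite mulmxA hf // -!mulmxA hg. Qed.

Lemma intertw_add n1 n2 (r1 : rep n1) (r2 : rep n2) f g :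
  intertw r1 r2 f -> intertw r1 r2 g -> intertw r1 r2 (f + g).
Proof. by move=> hf hg x Gx; rewrite mulmxDr mulmxDl hf // hg. Qed.

Lemma intertw_opp n1 n2 (r1 : rep n1) (r2 : rep n2) f :
  intertw r1 r2 f -> intertw r1 r2 (- f).
Proof. by move=> hf x Gx; rewrite mulmxN mulNmx hf. Qed.

Lemma intertw1 n (r : rep n) : intertw r r 1%:M.
Proof. by move=> x Gx; rewrite mulmx1 mul1mx. Qed.

Lemma intertw_exp n (r : rep n) (u : 'M[F]_n) k :
  intertw r r u -> intertw r r (u ^+ k).
Proof.
move=> hu; elim: k => [|k IHk]; first exact: intertw1.
by rewrite exprS -mulmxE; exact: intertw_mul hu IHk.
Qed.

Lemma intertw_inv n1 n2 (r1 : rep n1) (r2 : rep n2) f g :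
  intertw r1 r2 f -> f *m g = 1%:M -> g *m f = 1%:M -> intertw r2 r1 g.
Proof.
move=> hf fg gf x Gx.
by rewrite -[r2 x *m g]mul1mx -gf -!mulmxA (mulmxA f) -hf // -mulmxA fg mulmx1.
Qed.

Lemma intertw_invmx n (r : rep n) u :
  intertw r r u -> u \in unitmx -> intertw r r (invmx u).
Proof. by move=> hu Uu; apply: intertw_inv hu (mulmxV Uu) (mulVmx Uu). Qed.

Lemma retract_refl n (r : rep n) : retract r r.
Proof. by exists 1%:M, 1%:M; split; rewrite ?mulmx1 //; apply: intertw1. Qed.

Lemma retract_trans n1 n2 n3 (r1 : rep n1) (r2 : rep n2) (r3 : rep n3) :
  retract r1 r2 -> retract r2 r3 -> retract r1 r3.
Proof.
move=> [f [g [hf hg fg]]] [f' [g' [hf' hg' fg']]].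
exists (f *m f'), (g' *m g).
split; [exact: intertw_mul hf hf' | exact: intertw_mul hg' hg |].
by rewrite mulmxA -(mulmxA f) fg' mulmx1.
Qed.

Lemma iso_retract n1 n2 (r1 : rep n1) (r2 : rep n2) :
  isomorphic r1 r2 -> retract r1 r2.
Proof. by move=> [f [g [hf hg fg _]]]; exists f, g. Qed.

Lemma iso_refl n (r : rep n) : isomorphic r r.
Proof. by exists 1%:M, 1%:M; split; rewrite ?mulmx1 //; apply: intertw1. Qed.

Lemma iso_sym n1 n2 (r1 : rep n1) (r2 : rep n2) :
  isomorphic r1 r2 -> isomorphic r2 r1.
Proof. by move=> [f [g [hf hg fg gf]]]; exists g, f. Qed.

Lemma iso_trans n1 n2 n3 (r1 : rep n1) (r2 : rep n2) (r3 : rep n3) :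
  isomorphic r1 r2 -> isomorphic r2 r3 -> isomorphic r1 r3.
Proof.
move=> [f [g [hf hg fg gf]]] [f' [g' [hf' hg' fg' gf']]].
exists (f *m f'), (g' *m g).
split; [exact: intertw_mul hf hf' | exact: intertw_mul hg' hg | |].
  by rewrite mulmxA -(mulmxA f) fg' mulmx1.
by rewrite mulmxA -(mulmxA g') gf mulmx1.
Qed.

Lemma right_inverse_rank m n (A : 'M[F]_(m, n)) B :
  A *m B = 1%:M -> (m <= n)%N /\ row_free A.
Proof.
move=> AB; have le_m_rA : (m <= \rank A)%N.
  by rewrite -{1}(mxrank1 F m) -AB mxrankM_maxl.
split; first exact: leq_trans le_m_rA (rank_leq_col _).
by rewrite /row_free eqn_leq rank_leq_row le_m_rA.
Qed.

Lemma retract_dim n1 n2 (r1 : rep n1) (r2 : rep n2) :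
  retract r1 r2 -> (n1 <= n2)%N.
Proof. by move=> [f [g [_ _ /right_inverse_rank[]]]]. Qed.

Lemma iso_rsim n1 n2 (r1 : rep n1) (r2 : rep n2) :
  isomorphic r1 r2 -> mx_rsim r1 r2.
Proof.
move=> [f [g [hf hg fg gf]]].
have [le12 free_f] := right_inverse_rank fg; have [le21 _] := right_inverse_rank gf.
by exists f => //; apply/eqP; rewrite eqn_leq le12.
Qed.

Lemma rsim_iso n1 n2 (r1 : rep n1) (r2 : rep n2) :
  mx_rsim r1 r2 -> isomorphic r1 r2.
Proof.
case=> B e12; subst n2 => free_B hB.
have UB : B \in unitmx by rewrite -row_free_unit.
exists B, (invmx B); split; rewrite ?mulmxV ?mulVmx //.
exact: intertw_inv hB (mulmxV UB) (mulVmx UB).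
Qed.

End Intertwiners.

Section TensorIdentities.
Variables (F : fieldType) (gT : finGroupType) (G : {group gT}).
Local Notation rep := (mx_representation F G).

Lemma entry_row m n (A : 'M[F]_(m, n)) i j :
  A i j = (delta_mx (0 : 'I_1) i *m A) 0 j.
Proof. by rewrite -rowE mxE. Qed.

Lemma tens_mxE m1 n1 m2 n2 (A : 'M[F]_(m1, n1)) (B : 'M[F]_(m2, n2)) i1 i2 j1 j2 :
  tens_mx A B (mxvec_index i1 i2) (mxvec_index j1 j2) = A i1 j1 * B i2 j2.
Proof.
rewrite entry_row -mxvec_delta /tens_mx mul_vec_lin mxvecE.
rewrite /tens_map mxE (bigD1 i2) //= big1 => [|k nk]; last first.
  by rewrite mxE big1 ?mul0r // => l _; rewrite !mxE (negbTE nk) andbF mulr0.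
rewrite addr0 mxE (bigD1 i1) //= big1 => [|l nl]; last by rewrite !mxE (negbTE nl) mulr0.
by rewrite !mxE !eqxx mulr1 addr0.
Qed.

Definition unvec m n (u : 'I_(m * n)) : 'I_m * 'I_n :=
  enum_val (cast_ord (esym (mxvec_cast m n)) u).

Lemma unvecK m n (u : 'I_(m * n)) : mxvec_index (unvec u).1 (unvec u).2 = u.
Proof.
by case/mxvec_indexP: u => i j; rewrite /unvec /mxvec_index cast_ordK enum_rankK.
Qed.

Lemma mxvec_indexK m n (i : 'I_m) (j : 'I_n) : unvec (mxvec_index i j) = (i, j).
Proof. by rewrite /unvec /mxvec_index cast_ordK enum_rankK. Qed.

Definition perm_mat n1 n2 (s : 'I_n1 -> 'I_n2) : 'M[F]_(n1, n2) :=
  \matrix_(i, j) ((s i == j)%:R).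

Lemma perm_matE_l n1 n2 m (s : 'I_n1 -> 'I_n2) (A : 'M[F]_(n2, m)) i j :
  (perm_mat s *m A) i j = A (s i) j.
Proof.
rewrite mxE (bigD1 (s i)) //= big1 => [|k nk]; last first.
  by rewrite mxE eq_sym (negbTE nk) mul0r.
by rewrite mxE eqxx mul1r addr0.
Qed.

Lemma perm_matE_r n1 n2 m (s : 'I_n1 -> 'I_n2) (t : 'I_n2 -> 'I_n1)
    (A : 'M[F]_(m, n1)) i j :
  cancel s t -> cancel t s -> (A *m perm_mat s) i j = A i (t j).
Proof.
move=> sK tK; rewrite mxE (bigD1 (t j)) //= big1 => [|k nk].
  by rewrite mxE tK eqxx mulr1 addr0.
rewrite mxE; case: eqP => [skj|]; last by rewrite mulr0.
by case/eqP: nk; rewrite -skj sK.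
Qed.

Lemma reindex_iso n1 n2 (r1 : rep n1) (r2 : rep n2) (s : 'I_n1 -> 'I_n2)
    (t : 'I_n2 -> 'I_n1) :
  cancel s t -> cancel t s ->
  (forall x, x \in G -> forall i k, r1 x i k = r2 x (s i) (s k)) ->
  isomorphic r1 r2.
Proof.
move=> sK tK hr; exists (perm_mat s), (perm_mat t); split.
- move=> x Gx; apply/matrixP=> i j.
  by rewrite (perm_matE_r _ _ _ sK tK) perm_matE_l hr // tK.
- move=> x Gx; apply/matrixP=> i j.
  by rewrite (perm_matE_r _ _ _ tK sK) perm_matE_l hr // tK.
- apply/matrixP=> i j; rewrite (perm_matE_r _ _ _ tK sK) !mxE.
  by rewrite (inj_eq (can_inj sK)).
- apply/matrixP=> i j; rewrite (perm_matE_r _ _ _ sK tK) !mxE.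
  by rewrite (inj_eq (can_inj tK)).
Qed.

Lemma tprodE n1 n2 (A : rep n1) (B : rep n2) x :
  tprod_repr A B x = tens_mx (A x) (B x).
Proof. by []. Qed.

Lemma dsumE n1 n2 (A : rep n1) (B : rep n2) x :
  dsum_repr A B x = block_mx (A x) 0 0 (B x).
Proof. by []. Qed.

Lemma split_lshift m n (i : 'I_m) : split (lshift n i) = inl i.
Proof. exact: (unsplitK (inl _)). Qed.

Lemma split_rshift m n (i : 'I_n) : split (rshift m i) = inr i.
Proof. exact: (unsplitK (inr _)). Qed.

Definition swap_index m n (u : 'I_(m * n)) : 'I_(n * m) :=
  mxvec_index (unvec u).2 (unvec u).1.

Lemma swap_indexK m n : cancel (@swap_index m n) (@swap_index n m).
Proof. by move=> u; case/mxvec_indexP: u => i j; rewrite /swap_index !mxvec_indexK. Qed.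

Lemma iso_tprodC n1 n2 (A : rep n1) (B : rep n2) :
  isomorphic (tprod_repr A B) (tprod_repr B A).
Proof.
apply: (reindex_iso (@swap_indexK n1 n2) (@swap_indexK n2 n1)) => x Gx i k.
case/mxvec_indexP: i => i1 i2; case/mxvec_indexP: k => k1 k2.
by rewrite !tprodE /swap_index !mxvec_indexK /= !tens_mxE mulrC.
Qed.

Definition assoc_index a b c (u : 'I_(a * (b * c))) : 'I_(a * b * c) :=
  let: (i, jk) := unvec u in let: (j, k) := unvec jk in
  mxvec_index (mxvec_index i j) k.

Definition unassoc_index a b c (u : 'I_(a * b * c)) : 'I_(a * (b * c)) :=
  let: (ij, k) := unvec u in let: (i, j) := unvec ij in
  mxvec_index i (mxvec_index j k).

Lemma assoc_indexK a b c : cancel (@assoc_index a b c) (@unassoc_index a b c).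
Proof.
move=> u; case/mxvec_indexP: u => i jk; case/mxvec_indexP: jk => j k.
by rewrite /assoc_index /unassoc_index !mxvec_indexK.
Qed.

Lemma unassoc_indexK a b c : cancel (@unassoc_index a b c) (@assoc_index a b c).
Proof.
move=> u; case/mxvec_indexP: u => ij k; case/mxvec_indexP: ij => i j.
by rewrite /assoc_index /unassoc_index !mxvec_indexK.
Qed.

Lemma iso_tprodA n1 n2 n3 (A : rep n1) (B : rep n2) (C : rep n3) :
  isomorphic (tprod_repr A (tprod_repr B C)) (tprod_repr (tprod_repr A B) C).
Proof.
apply: (reindex_iso (@assoc_indexK n1 n2 n3) (@unassoc_indexK n1 n2 n3)) => x Gx i k.
case/mxvec_indexP: i => i1 i; case/mxvec_indexP: i => i2 i3.
case/mxvec_indexP: k => k1 k; case/mxvec_indexP: k => k2 k3.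
by rewrite !tprodE /assoc_index !mxvec_indexK !tens_mxE mulrA.
Qed.

Definition distr_index a b c (u : 'I_((a + b) * c)) : 'I_(a * c + b * c) :=
  let: (i, k) := unvec u in
  match split i with
  | inl i' => lshift (b * c) (mxvec_index i' k)
  | inr i' => rshift (a * c) (mxvec_index i' k)
  end.

Definition undistr_index a b c (v : 'I_(a * c + b * c)) : 'I_((a + b) * c) :=
  match split v with
  | inl w => mxvec_index (lshift b (unvec w).1) (unvec w).2
  | inr w => mxvec_index (rshift a (unvec w).1) (unvec w).2
  end.

Lemma distr_indexK a b c : cancel (@distr_index a b c) (@undistr_index a b c).
Proof.
move=> u; case/mxvec_indexP: u => i k; rewrite /distr_index mxvec_indexK.
rewrite -[i]splitK; case: (split i) => j /=.
  by rewrite split_lshift /undistr_index split_lshift mxvec_indexK.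
by rewrite split_rshift /undistr_index split_rshift mxvec_indexK.
Qed.

Lemma undistr_indexK a b c : cancel (@undistr_index a b c) (@distr_index a b c).
Proof.
move=> v; rewrite /undistr_index -[v]splitK.
by case: (split v) => w; rewrite ?split_lshift ?split_rshift /distr_index
  mxvec_indexK ?split_lshift ?split_rshift unvecK.
Qed.

Lemma iso_tprodDl n1 n2 n3 (A : rep n1) (B : rep n2) (C : rep n3) :
  isomorphic (tprod_repr (dsum_repr A B) C)
             (dsum_repr (tprod_repr A C) (tprod_repr B C)).
Proof.
apply: (reindex_iso (@distr_indexK n1 n2 n3) (@undistr_indexK n1 n2 n3)) => x Gx i k.
case/mxvec_indexP: i => i1 i2; case/mxvec_indexP: k => k1 k2.
rewrite !tprodE !dsumE /distr_index !mxvec_indexK tens_mxE -[i1]splitK -[k1]splitK.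
by case: (split i1) => j1; case: (split k1) => l1;
  rewrite ?split_lshift ?split_rshift ?block_mxEul ?block_mxEur ?block_mxEdl
    ?block_mxEdr ?tens_mxE ?mxE ?mul0r.
Qed.

Lemma intertw_tens n1 n2 n1' n2' (A : rep n1) (B : rep n2) (A' : rep n1')
    (B' : rep n2') f g :
  intertw A A' f -> intertw B B' g ->
  intertw (tprod_repr A B) (tprod_repr A' B') (tens_mx f g).
Proof. by move=> hf hg x Gx; rewrite !tprodE -!tens_mx_mul hf // hg. Qed.

Lemma retract_tprod n1 n2 n1' n2' (A : rep n1) (B : rep n2) (A' : rep n1')
    (B' : rep n2') :
  retract A A' -> retract B B' -> retract (tprod_repr A B) (tprod_repr A' B').
Proof.
move=> [f [g [hf hg fg]]] [f' [g' [hf' hg' fg']]].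
exists (tens_mx f f'), (tens_mx g g'); split; try exact: intertw_tens.
by rewrite -tens_mx_mul fg fg' tens_mx1.
Qed.

Lemma iso_tprod n1 n2 n1' n2' (A : rep n1) (B : rep n2) (A' : rep n1')
    (B' : rep n2') :
  isomorphic A A' -> isomorphic B B' ->
  isomorphic (tprod_repr A B) (tprod_repr A' B').
Proof.
move=> [f [g [hf hg fg gf]]] [f' [g' [hf' hg' fg' gf']]].
exists (tens_mx f f'), (tens_mx g g'); split; try exact: intertw_tens.
  by rewrite -tens_mx_mul fg fg' tens_mx1.
by rewrite -tens_mx_mul gf gf' tens_mx1.
Qed.

Lemma iso_dsum n1 n2 n1' n2' (A : rep n1) (B : rep n2) (A' : rep n1')
    (B' : rep n2') :
  isomorphic A A' -> isomorphic B B' ->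
  isomorphic (dsum_repr A B) (dsum_repr A' B').
Proof.
move=> [f [g [hf hg fg gf]]] [f' [g' [hf' hg' fg' gf']]].
exists (block_mx f 0 0 f'), (block_mx g 0 0 g'); split.
- by move=> x Gx; rewrite !dsumE !mulmx_block !mulmx0 !mul0mx !addr0 !add0r hf // hf'.
- by move=> x Gx; rewrite !dsumE !mulmx_block !mulmx0 !mul0mx !addr0 !add0r hg // hg'.
- by rewrite mulmx_block !mulmx0 !mul0mx !addr0 !add0r fg fg' -scalar_mx_block.
- by rewrite mulmx_block !mulmx0 !mul0mx !addr0 !add0r gf gf' -scalar_mx_block.
Qed.

Lemma iso_tprodDr n1 n2 n3 (A : rep n1) (B : rep n2) (C : rep n3) :
  isomorphic (tprod_repr C (dsum_repr A B))
             (dsum_repr (tprod_repr C A) (tprod_repr C B)).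
Proof.
apply: iso_trans (iso_tprodC _ _) _; apply: iso_trans (iso_tprodDl _ _ _) _.
exact: iso_dsum (iso_tprodC _ _) (iso_tprodC _ _).
Qed.
End TensorIdentities.

Section DirectSums.
Variables (F : fieldType) (gT : finGroupType) (G : {group gT}).
Local Notation rep := (mx_representation F G).

Lemma iso_dsum_of_split n a b (N : rep n) (A : rep a) (B : rep b) q1 p1 q2 p2 :
  intertw N A q1 -> intertw A N p1 -> intertw N B q2 -> intertw B N p2 ->
  p1 *m q1 = 1%:M -> p2 *m q2 = 1%:M -> q1 *m p1 + q2 *m p2 = 1%:M ->
  isomorphic N (dsum_repr A B).
Proof.
move=> hq1 hp1 hq2 hp2 pq1 pq2 qp.
have cross : p1 *m q2 = 0 /\ p2 *m q1 = 0.
  have e i j (pi : 'M[F]_(i, n)) (qj : 'M[F]_(n, j)) :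
      pi *m qj = pi *m q1 *m (p1 *m qj) + pi *m q2 *m (p2 *m qj).
    by rewrite !mulmxA -mulmxDl -!(mulmxA pi) -mulmxDr qp mulmx1.
  have double0 i j (y : 'M[F]_(i, j)) : y = y + y -> y = 0.
    by rewrite -{1}[y]addr0 => /addrI <-.
  split; apply: double0.
    by rewrite {1}e pq1 pq2 mul1mx mulmx1.
  by rewrite {1}e pq1 pq2 mul1mx mulmx1 addrC.
exists (row_mx q1 q2), (col_mx p1 p2); split.
- move=> x Gx; rewrite dsumE mul_row_block mul_mx_row !mulmx0 !addr0 !add0r.
  by rewrite hq1 // hq2.
- move=> x Gx; rewrite dsumE mul_block_col mul_col_mx !mul0mx !addr0 !add0r.
  by rewrite hp1 // hp2.
- by rewrite mul_row_col.
- by rewrite mul_col_row pq1 pq2 cross.1 cross.2 -scalar_mx_block.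
Qed.

Lemma dsum_split a b (A : rep a) (B : rep b) :
  [/\ intertw (dsum_repr A B) A (col_mx 1%:M 0),
      intertw A (dsum_repr A B) (row_mx 1%:M 0),
      intertw (dsum_repr A B) B (col_mx 0 1%:M)
    & intertw B (dsum_repr A B) (row_mx 0 1%:M)].
Proof.
by split=> x Gx; rewrite ?dsumE ?mul_block_col ?mul_col_mx ?mul_row_block
  ?mul_mx_row ?mulmx1 ?mulmx0 ?mul0mx ?mul1mx ?addr0 ?add0r.
Qed.

Lemma dsum_partition a b :
  col_mx 1%:M 0 *m row_mx 1%:M 0 + col_mx 0 1%:M *m row_mx 0 1%:M
    = 1%:M :> 'M[F]_(a + b).
Proof.
by rewrite !mul_col_row !mulmx0 !mul0mx !mulmx1 add_block_mx !addr0 !add0r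
  -scalar_mx_block.
Qed.

Lemma retract_dsuml a b (A : rep a) (B : rep b) : retract A (dsum_repr A B).
Proof.
have [hp hi _ _] := dsum_split A B.
exists (row_mx 1%:M 0), (col_mx 1%:M 0); split => //.
by rewrite mul_row_col mulmx1 mulmx0 addr0.
Qed.

Lemma retract_dsumr a b (A : rep a) (B : rep b) : retract B (dsum_repr A B).
Proof.
have [_ _ hp hi] := dsum_split A B.
exists (row_mx 0 1%:M), (col_mx 0 1%:M); split => //.
by rewrite mul_row_col mulmx1 mulmx0 add0r.
Qed.

Lemma intertw_module n (N : rep n) P : intertw N N P -> mxmodule N P.
Proof. by move=> hP; apply/mxmoduleP=> x Gx; rewrite -hP // submxMl. Qed.

Lemma idem_split n (N : rep n) P (modP : mxmodule N P) :
  intertw N N P -> P *m P = P ->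
  [/\ intertw N (submod_repr modP) (in_submod P P),
      intertw (submod_repr modP) N (@val_submod F n P _ 1%:M),
      @val_submod F n P _ 1%:M *m in_submod P P = 1%:M
    & in_submod P P *m @val_submod F n P _ 1%:M = P].
Proof.
move=> hP PP; split.
- move=> x Gx; rewrite -in_submodJ // [in_submod P P]in_submodE.
  by rewrite [in_submod P (P *m _)]in_submodE mulmxA hP.
- move=> x Gx; have := val_submodJ modP (1%:M : 'M_(\rank P)) Gx.
  by rewrite mul1mx [val_submod (submod_mx _ _)]val_submodE => <-.
- have fixP : @val_submod F n P _ 1%:M *m P = @val_submod F n P _ 1%:M.
    have [w ->] := submxP (val_submodP (U := P) (1%:M : 'M_(\rank P))).
    by rewrite -mulmxA PP.
  by rewrite [in_submod P P]in_submodE mulmxA fixP -in_submodE val_submodK.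
- by rewrite -val_submodE in_submodK.
Qed.

Lemma idem_compl n (N : rep n) P :
  intertw N N P -> P *m P = P ->
  intertw N N (1%:M - P) /\ (1%:M - P) *m (1%:M - P) = 1%:M - P.
Proof.
move=> hP PP; split; first exact: intertw_add (intertw1 N) (intertw_opp hP).
by rewrite mulmxBl mul1mx mulmxBr mulmx1 PP subrr subr0.
Qed.

Lemma dsummandP w n (W : rep w) (N : rep n) : is_dsummand W N <-> retract W N.
Proof.
split=> [[y [Y /rsim_iso isoN]]|[f [g [hf hg fg]]]].
  exact: retract_trans (retract_dsuml W Y) (iso_retract (iso_sym isoN)).
have hgf : intertw N N (g *m f) by apply: intertw_mul hg hf.
have gfgf : g *m f *m (g *m f) = g *m f by rewrite mulmxA -(mulmxA g) fg mulmx1.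
have [hQ QQ] := idem_compl hgf gfgf.
have modQ := intertw_module hQ.
have [hq hp pq qp] := idem_split modQ hQ QQ.
exists (\rank (1%:M - g *m f)), (submod_repr modQ); apply: iso_rsim.
apply: iso_dsum_of_split hg hf hq hp fg pq _.
by rewrite qp addrC subrK.
Qed.
End DirectSums.

Section RankOfPowers.
Variables (F : fieldType) (n : nat) (u : 'M[F]_n).

Lemma rank_exprS_le k : (\rank (u ^+ k.+1) <= \rank (u ^+ k))%N.
Proof. by rewrite mxrankS // exprS -mulmxE submxMl. Qed.

Lemma expr_rowspace_stable k :
  \rank (u ^+ k.+1) = \rank (u ^+ k) -> forall i, (u ^+ (i + k).+1 :=: u ^+ (i + k))%MS.
Proof.
have exprSmx m : u ^+ m.+1 = u ^+ m *m u by rewrite exprSr mulmxE.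
move=> eq_k; elim=> [|i IHi].
  apply/eqmxP; rewrite -(mxrank_leqif_eq _).2 ?eq_k //.
  by rewrite exprS -mulmxE submxMl.
by rewrite addSn (exprSmx (i + k).+1) {2}(exprSmx (i + k)); apply: eqmxMr.
Qed.

Lemma rank_expr_stable k i :
  \rank (u ^+ k.+1) = \rank (u ^+ k) -> \rank (u ^+ (i + k)) = \rank (u ^+ k).
Proof.
by move=> eq_k; elim: i => // i IHi; rewrite addSn (expr_rowspace_stable eq_k i).
Qed.

Lemma rank_expr_stable_n : \rank (u ^+ n.+1) = \rank (u ^+ n).
Proof.
case: (eqVneq (\rank (u ^+ n.+1)) (\rank (u ^+ n))) => [/eqP //|neq_n]; exfalso.
have drop j : (j <= n)%N -> (\rank (u ^+ j.+1) < \rank (u ^+ j))%N.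
  move=> le_jn; rewrite ltn_neqAle rank_exprS_le andbT; apply/eqP=> eq_j.
  have eS := rank_expr_stable (n - j).+1 eq_j; have e0 := rank_expr_stable (n - j) eq_j.
  rewrite addSn subnK // in eS; rewrite subnK // in e0.
  by case/eqP: neq_n; rewrite eS e0.
have bound j : (j <= n.+1)%N -> (\rank (u ^+ j) + j <= n)%N.
  elim: j => [_|j IHj lt_jn]; first by rewrite expr0 mxrank1 addn0.
  by rewrite addnS; apply: leq_trans (IHj (ltnW lt_jn)); rewrite ltn_add2r drop.
by have := bound n.+1 (leqnn _); rewrite addnS ltnNge leq_addl.
Qed.

Lemma rank_expr_double : \rank (u ^+ n *m u ^+ n) = \rank (u ^+ n).
Proof. by rewrite mulmxE -exprD rank_expr_stable // rank_expr_stable_n. Qed.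
End RankOfPowers.

Section Indecomposable.
Variables (F : fieldType) (gT : finGroupType) (G : {group gT}).
Local Notation rep := (mx_representation F G).

Lemma expr_unit n (u : 'M[F]_n) k : (0 < k)%N -> u ^+ k \in unitmx -> u \in unitmx.
Proof. by case: k => // k _; rewrite exprS -mulmxE unitmx_mul => /andP[]. Qed.

Lemma idem_expr n (P : 'M[F]_n) k : P *m P = P -> (0 < k)%N -> P ^+ k = P.
Proof.
move=> PP; case: k => // k _.
by elim: k => [|k IHk]; rewrite ?expr1 // exprS IHk -mulmxE PP.
Qed.

(* The image and the kernel of psi = u ^+ n are
   complementary submodules, since the ranks of the powers of u are stable
   from n on; indecomposability forces one of them to vanish. *)
Lemma fitting n (N : rep n) u :
  mx_indecomposable N -> intertw N N u -> u \in unitmx \/ u ^+ n = 0.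
Proof.
move=> [n_gt0 indecN] hu; set psi := u ^+ n.
have hpsi : intertw N N psi by apply: intertw_exp.
have modK : mxmodule N (kermx psi).
  apply/mxmoduleP=> x Gx.
  by rewrite sub_kermx -mulmxA hpsi // mulmxA mulmx_ker mul0mx.
have kerK : (kermx (psi *m psi) <= kermx psi)%MS.
  have sub_ker : (kermx psi <= kermx (psi *m psi))%MS.
    by rewrite sub_kermx mulmxA mulmx_ker mul0mx.
  have /eqmxP <- // : (kermx psi == kermx (psi *m psi))%MS.
  by rewrite -(mxrank_leqif_eq sub_ker).2 !mxrank_ker rank_expr_double.
have cap0 : (psi :&: kermx psi)%MS = 0.
  have [z def_cap] := submxP (capmxSl psi (kermx psi)).
  have cap_psi : (psi :&: kermx psi)%MS *m psi = 0.
    by apply/eqP; rewrite -sub_kermx capmxSr.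
  have : (z <= kermx (psi *m psi))%MS by rewrite sub_kermx mulmxA -def_cap cap_psi.
  by move/submx_trans/(_ kerK); rewrite sub_kermx def_cap => /eqP->.
have full : (psi + kermx psi :=: 1%:M)%MS.
  apply/eqmxP/andP; split; first exact: submx1.
  rewrite sub1mx /row_full mxrank_disjoint_sum // mxrank_ker subnKC //.
  exact: rank_leq_row.
have [psi0|ker0] := indecN psi _ (intertw_module hpsi) modK
  (introT mxdirect_addsP cap0) full; [by right | left].
have : psi \in unitmx by rewrite -row_free_unit -kermx_eq0 ker0.
exact: expr_unit.
Qed.

Lemma indec_local n (N : rep n) u v :
  mx_indecomposable N -> intertw N N u -> intertw N N v -> u + v = 1%:M ->
  u \in unitmx \/ v \in unitmx.
Proof.
move=> indecN hu hv uv; have [|nil_u] := fitting indecN hu; first by left.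
right; have def_v : v = 1%:M - u by rewrite -uv addrC addKr.
have geom : v *m \sum_(i < n) u ^+ i = 1%:M.
  by rewrite def_v mulmxE -opprB mulNr -subrX1 nil_u sub0r opprK.
by case: (mulmx1_unit geom).
Qed.

Lemma idem_unit n (P : 'M[F]_n) : P *m P = P -> P \in unitmx -> P = 1%:M.
Proof. by move=> PP unitP; rewrite -[P]mul1mx -(mulVmx unitP) -mulmxA PP mulVmx. Qed.

Lemma indec_idem n (N : rep n) P :
  mx_indecomposable N -> intertw N N P -> P *m P = P -> P = 0 \/ P = 1%:M.
Proof.
move=> indecN hP PP; have [unitP|nilP] := fitting indecN hP.
  by right; apply: idem_unit.
by left; rewrite -nilP idem_expr //; case: indecN.
Qed.

(* An indecomposable retract of an indecomposable module is isomorphic to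
   it, since the induced idempotent g f on N is 0 or 1. *)
Lemma retract_indec_iso w n (W : rep w) (N : rep n) :
  mx_indecomposable W -> mx_indecomposable N -> retract W N -> isomorphic W N.
Proof.
move=> [w_gt0 _] indecN [f [g [hf hg fg]]].
have gfgf : g *m f *m (g *m f) = g *m f by rewrite mulmxA -(mulmxA g) fg mulmx1.
have [gf0|gf1] := indec_idem indecN (intertw_mul hg hf) gfgf; last by exists f, g.
have one_eq0 : f *m (g *m f) *m g = 1%:M by rewrite mulmxA fg mul1mx fg.
rewrite gf0 mulmx0 mul0mx in one_eq0.
by have := mxrank1 F w; rewrite -one_eq0 mxrank0 => w0; rewrite -w0 in w_gt0.
Qed.

Lemma retract_indec_dsum w a b (W : rep w) (A : rep a) (B : rep b) :
  mx_indecomposable W -> retract W (dsum_repr A B) -> retract W A \/ retract W B.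
Proof.
move=> indecW [f [g [hf hg fg]]]; have [pA iA pB iB] := dsum_split A B.
set u := f *m col_mx 1%:M 0 *m (row_mx 1%:M 0 *m g).
set v := f *m col_mx 0 1%:M *m (row_mx 0 1%:M *m g).
have hu : intertw W W u by apply: intertw_mul (intertw_mul hf pA) (intertw_mul iA hg).
have hv : intertw W W v by apply: intertw_mul (intertw_mul hf pB) (intertw_mul iB hg).
have uv : u + v = 1%:M.
  rewrite -[RHS]fg -(mulmx1 f) -(dsum_partition F a b) mulmxDr mulmxDl.
  by rewrite /u /v !mulmxA.
have [unit_u|unit_v] := indec_local indecW hu hv uv; [left | right].
  exists (f *m col_mx 1%:M 0), (row_mx 1%:M 0 *m g *m invmx u); split.
  - exact: intertw_mul hf pA.
  - exact: intertw_mul (intertw_mul iA hg) (intertw_invmx hu unit_u).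
  - by rewrite mulmxA mulmxV.
exists (f *m col_mx 0 1%:M), (row_mx 0 1%:M *m g *m invmx v); split.
- exact: intertw_mul hf pB.
- exact: intertw_mul (intertw_mul iB hg) (intertw_invmx hv unit_v).
- by rewrite mulmxA mulmxV.
Qed.
End Indecomposable.

Section Decomposition.
Variables (F : fieldType) (gT : finGroupType) (G : {group gT}).
Local Notation rep := (mx_representation F G).

Lemma decomposable_idem n (N : rep n) :
  (0 < n)%N -> ~ mx_indecomposable N ->
  exists P, [/\ intertw N N P, P *m P = P, P != 0 & P != 1%:M].
Proof.
move=> n_gt0 notIndec; apply: NNPP => noIdem; apply: notIndec.
split=> // U V modU modV /mxdirect_addsP capUV sumUV.
case: (eqVneq U 0) => [|nzU]; [by left | case: (eqVneq V 0) => [|nzV]; [by right|]].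
exfalso; apply: noIdem; exists (proj_mx U V); split.
- have /hom_mxP homP : (1%:M <= dom_hom_mx N (proj_mx U V))%MS.
    by rewrite -sumUV proj_mx_hom.
  by move=> x Gx; have := homP x Gx; rewrite !mul1mx.
- exact: proj_mx_proj.
- by apply: contraNneq nzU => P0; rewrite -(proj_mx_id capUV (submx_refl U)) P0 mulmx0.
- by apply: contraNneq nzV => P1; rewrite -[V]mulmx1 -P1 proj_mx_0.
Qed.

Lemma idem_rank n (P : 'M[F]_n) :
  P *m P = P -> P != 0 -> P != 1%:M -> (0 < \rank P < n)%N.
Proof.
move=> PP nz_P nz1_P; rewrite lt0n mxrank_eq0 nz_P ltn_neqAle rank_leq_row andbT.
apply: contra nz1_P => fullP; apply/eqP/idem_unit => //.
by rewrite -row_free_unit /row_free fullP.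
Qed.

Lemma rep_decomposition_ind (Pr : forall n, rep n -> Prop) :
  (forall N : rep 0, Pr 0%N N) ->
  (forall n (N : rep n), mx_indecomposable N -> Pr n N) ->
  (forall n a b (N : rep n) (A : rep a) (B : rep b),
     isomorphic N (dsum_repr A B) -> Pr a A -> Pr b B -> Pr n N) ->
  forall n (N : rep n), Pr n N.
Proof.
move=> Pr0 PrIndec PrDsum n0 N0; elim: n0.+1 {-2}n0 (ltnSn n0) N0 => // m IHm.
case=> [|n] lt_nm N; first exact: Pr0.
have [indecN|notIndec] := classic (mx_indecomposable N); first exact: PrIndec.
have [P [hP PP nz_P nz1_P]] := decomposable_idem (ltn0Sn n) notIndec.
have [hQ QQ] := idem_compl hP PP.
have nz_Q : 1%:M - P != 0 by rewrite subr_eq0 eq_sym.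
have nz1_Q : 1%:M - P != 1%:M by rewrite -subr_eq0 addrAC subrr add0r oppr_eq0.
have [modP modQ] := (intertw_module hP, intertw_module hQ).
have [hq1 hp1 pq1 qp1] := idem_split modP hP PP.
have [hq2 hp2 pq2 qp2] := idem_split modQ hQ QQ.
have /andP[_ ltP] := idem_rank PP nz_P nz1_P.
have /andP[_ ltQ] := idem_rank QQ nz_Q nz1_Q.
apply: PrDsum (iso_dsum_of_split hq1 hp1 hq2 hp2 pq1 pq2 _) _ _.
- by rewrite qp1 qp2 addrC subrK.
- by apply: IHm; apply: leq_trans ltP _.
- by apply: IHm; apply: leq_trans ltQ _.
Qed.
End Decomposition.

Section Covering.
Variables (F : fieldType) (gT : finGroupType) (G : {group gT}).
Local Notation rep := (mx_representation F G).
Local Notation reps := (seq {e : nat & rep e}).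

Definition covered (L : reps) n (N : rep n) :=
  forall w (W : rep w), mx_indecomposable W -> retract W N ->
    exists2 s, List.In s L & mx_rsim W (projT2 s).

Lemma covered_retract L n n' (N : rep n) (N' : rep n') :
  retract N N' -> covered L N' -> covered L N.
Proof. by move=> NN' covN' w W indecW /retract_trans/(_ NN'); apply: covN'. Qed.

Lemma covered_iso L n n' (N : rep n) (N' : rep n') :
  isomorphic N N' -> covered L N' -> covered L N.
Proof. by move/iso_retract; apply: covered_retract. Qed.

Lemma covered_incl L L' n (N : rep n) :
  (forall s, List.In s L -> List.In s L') -> covered L N -> covered L' N.
Proof. by move=> LL' covN w W indecW /(covN w W indecW)[s /LL' L's]; exists s. Qed.

Lemma covered_dim0 L n (N : rep n) : n = 0%N -> covered L N.
Proof.
move=> n0 w W [w_gt0 _] /retract_dim; rewrite n0 leqn0 => /eqP w0.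
by rewrite w0 in w_gt0.
Qed.

Lemma covered_indec n (N : rep n) :
  mx_indecomposable N -> covered [:: Tagged (fun e => rep e) N] N.
Proof.
move=> indecN w W indecW WN; exists (Tagged (fun e => rep e) N); first by left.
exact/iso_rsim/retract_indec_iso.
Qed.

(* By the exchange property, covering passes to direct sums. *)
Lemma covered_dsum L a b (A : rep a) (B : rep b) :
  covered L A -> covered L B -> covered L (dsum_repr A B).
Proof.
by move=> covA covB w W indecW /(retract_indec_dsum indecW)[/covA|/covB]; apply.
Qed.

(* Every module is covered by a finite list: the indecomposable summands of
   a decomposition. *)
Lemma finite_cover n (N : rep n) : exists L, covered L N.
Proof.
elim/rep_decomposition_ind: n / N => [N|n N indecN|n a b N A B isoN [LA covA] [LB covB]].
- by exists [::]; apply: covered_dim0.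
- by eexists; apply: covered_indec.
exists (LA ++ LB); apply: covered_iso isoN _; apply: covered_dsum.
  by apply: covered_incl covA => s inA; apply: List.in_or_app; left.
by apply: covered_incl covB => s inB; apply: List.in_or_app; right.
Qed.

Lemma covered_tprodl L0 L d (M : rep d) n (N : rep n) :
  (forall s, List.In s L0 -> covered L (tprod_repr (projT2 s) M)) ->
  covered L0 N -> covered L (tprod_repr N M).
Proof.
move=> covL0; elim/rep_decomposition_ind: n / N =>
  [N _|n N indecN covN|n a b N A B isoN IHA IHB covN].
- exact: covered_dim0.
- have [s inL0 /rsim_iso isoNs] := covN n N indecN (retract_refl N).
  exact: covered_iso (iso_tprod isoNs (iso_refl M)) (covL0 s inL0).
have retractN c (C : rep c) : retract C (dsum_repr A B) -> retract C N.
  by move=> CAB; apply: retract_trans CAB (iso_retract (iso_sym isoN)).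
apply: covered_iso (iso_trans (iso_tprod isoN (iso_refl M)) (iso_tprodDl _ _ _)) _.
apply: covered_dsum.
  by apply: IHA; apply: covered_retract covN; apply: retractN (retract_dsuml A B).
by apply: IHB; apply: covered_retract covN; apply: retractN (retract_dsumr A B).
Qed.

Lemma finite_cover_tprodl (S : reps) d (M : rep d) :
  exists L, forall s, List.In s S -> covered L (tprod_repr (projT2 s) M).
Proof.
elim: S => [|s S [L covL]]; first by exists [::].
have [Ls covs] := finite_cover (tprod_repr (projT2 s) M).
exists (Ls ++ L) => t [<-|inS].
  by apply: covered_incl covs => u inLs; apply: List.in_or_app; left.
by apply: covered_incl (covL t inS) => u inL; apply: List.in_or_app; right.
Qed.

Lemma algebraic_coveredP d (M : rep d) :
  mx_algebraic M <-> exists L, forall k, covered L (tpow_repr M k).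
Proof.
split=> [[L covL]|[L covL]]; exists L => k w W indecW.
  by move/dsummandP; apply: covL.
by move/dsummandP; apply: covL.
Qed.
End Covering.

Section SquareDecomposition.
Variables (F : fieldType) (gT : finGroupType) (G : {group gT}).
Local Notation rep := (mx_representation F G).
Variables (d e : nat) (M : rep d) (X : rep e) (L : seq {e : nat & rep e}).

Hypothesis isoMM : isomorphic (tprod_repr M M) (dsum_repr M X).
Hypothesis covM : covered L M.
Hypothesis covX : forall a, covered L (tpow_repr X a).

Definition X_bounded z (Z : rep z) := exists a, retract Z (tpow_repr X a).

Hypothesis covZM : forall z (Z : rep z), X_bounded Z -> covered L (tprod_repr Z M).

Definition stably_covered n (N : rep n) :=
  covered L N /\ forall z (Z : rep z), X_bounded Z -> covered L (tprod_repr Z N).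

(* Z (x) X is a retract of X^(a+1) = X (x) X^a when Z is one of X^a. *)
Lemma X_bounded_tprodr z (Z : rep z) : X_bounded Z -> X_bounded (tprod_repr Z X).
Proof.
move=> [a ZXa]; exists a.+1.
exact: retract_trans (retract_tprod ZXa (retract_refl X)) (iso_retract (iso_tprodC _ _)).
Qed.

Lemma covered_X_bounded z (Z : rep z) : X_bounded Z -> covered L Z.
Proof. by move=> [a ZXa]; apply: covered_retract ZXa (@covX a). Qed.

Lemma stably_covered_iso n n' (N : rep n) (N' : rep n') :
  isomorphic N N' -> stably_covered N' -> stably_covered N.
Proof.
move=> isoN [covN' covZN']; split; first exact: covered_iso isoN covN'.
by move=> z Z XZ; apply: covered_iso (iso_tprod (iso_refl Z) isoN) (covZN' z Z XZ).
Qed.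

Lemma stably_covered_dsum a b (A : rep a) (B : rep b) :
  stably_covered A -> stably_covered B -> stably_covered (dsum_repr A B).
Proof.
move=> [covA covZA] [covB covZB]; split; first exact: covered_dsum.
move=> z Z XZ; apply: covered_iso (iso_tprodDr _ _ _) _.
exact: covered_dsum (covZA z Z XZ) (covZB z Z XZ).
Qed.

(* Tensoring on the left with X preserves stable covers, since
   Z (x) (X (x) N) ~ (Z (x) X) (x) N and Z (x) X is again X-bounded. *)
Lemma stably_covered_tprodX n (N : rep n) :
  stably_covered N -> stably_covered (tprod_repr X N).
Proof.
move=> [_ covZN]; split; first by apply: covZN; exists 0%N; apply: retract_refl.
move=> z Z XZ; apply: covered_iso (iso_tprodA _ _ _) _.
exact: covZN (X_bounded_tprodr XZ).
Qed.

Lemma stably_covered_M : stably_covered M.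
Proof. by split. Qed.

Lemma stably_covered_X : stably_covered X.
Proof.
split; first exact: (@covX 0%N).
by move=> z Z XZ; apply/covered_X_bounded/X_bounded_tprodr.
Qed.

(* M^(k+3) = M (x) (M (x) M^(k+1)) ~ (M (+) X) (x) M^(k+1)
   ~ M^(k+2) (+) X (x) M^(k+1). *)
Lemma tpow_step k :
  isomorphic (tpow_repr M k.+2)
             (dsum_repr (tpow_repr M k.+1) (tprod_repr X (tpow_repr M k))).
Proof.
apply: iso_trans (iso_tprodA M M (tpow_repr M k)) _.
exact: iso_trans (iso_tprod isoMM (iso_refl _)) (iso_tprodDl _ _ _).
Qed.

(* By two-step induction along tpow_step, all tensor powers of M are
   stably covered. *)
Lemma stably_covered_tpow k : stably_covered (tpow_repr M k).
Proof.
suff [] : stably_covered (tpow_repr M k) /\ stably_covered (tpow_repr M k.+1) by [].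
elim: k => [|k [covMk covMk1]].
  split; first exact: stably_covered_M.
  exact: stably_covered_iso isoMM (stably_covered_dsum stably_covered_M stably_covered_X).
split=> //; apply: stably_covered_iso (tpow_step k) _.
exact: stably_covered_dsum covMk1 (stably_covered_tprodX covMk).
Qed.
End SquareDecomposition.

Unset Implicit Arguments.

Theorem mainTheorem9 (F : fieldType) (p : nat) (gT : finGroupType)
  (G : {group gT}) (hp : p \in [pchar F])
  (d : nat) (M : mx_representation F G d) (hM : mx_indecomposable M)
  (e : nat) (X : mx_representation F G e) (hX : mx_algebraic X)
  (hMM : mx_rsim (tprod_repr M M) (dsum_repr M X)) :
  mx_algebraic M.
Proof.
have [SX covSX] := (algebraic_coveredP X).1 hX.
have [L1 covL1] := finite_cover_tprodl SX M.
set L := Tagged (fun e => mx_representation F G e) M :: SX ++ L1.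
have inSX s : List.In s SX -> List.In s L.
  by move=> inS; right; apply: List.in_or_app; left.
have inL1 s : List.In s L1 -> List.In s L.
  by move=> inL; right; apply: List.in_or_app; right.
have covM : covered L M.
  by apply: covered_incl (covered_indec hM) => s [<-|[]]; left.
have covX a : covered L (tpow_repr X a) by apply: covered_incl (covSX a).
have covZM z (Z : mx_representation F G z) :
    X_bounded X Z -> covered L (tprod_repr Z M).
  move=> [a ZXa]; apply: covered_tprodl (covered_retract ZXa (covSX a)).
  by move=> s inS; apply: covered_incl (covL1 s inS).
apply/algebraic_coveredP; exists L => k.
by have [] := stably_covered_tpow (rsim_iso hMM) covM covX covZM k.
Qed.
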